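(* Let $\ell\ge7$ and let $F$ be an apexed $\ell$-frame. Then every two holes of $F$ are equivalent.
   Context: A hole is an induced cycle of length at least four. Two holes $C,C'$ are close if $|V(C)\cap V(C')|\ge4$, and equivalent if there is a sequence of holes $C=C_1,\dots,C_n=C'$ with $C_i,C_{i+1}$ close for $1\le i<n$. A threshold graph is a graph with no induced four-vertex path, four-vertex cycle, or complement of a four-vertex cycle. $\ell$-frame for odd $\ell$: let $k\ge3$ and $a_1,\dots,a_k,b_1,\dots,b_k$ be distinct; for $1\le i\le k$, $P_i$ is a path of length $(\ell-3)/2$ with ends $a_i,b_i$, pairwise vertex-disjoint. $A,B$ are threshold graphs on $\{a_1,\dots,a_k\}$ and $\{b_1,\dots,b_k\}$ with $b_ib_j$ an edge iff $a_ia_j$ is not, each of $A,B$ either disconnected or two-connected. The $\ell$-frame is $A\cup B\cup P_1\cup\dots\cup P_k$ (no other edges). Exactly one of $A,B$ is disconnected; the apexed $\ell$-frame adds a new vertex adjacent exactly to all vertices of the disconnected one. $\ell$-frame for even $\ell$: let $m\ge0$, $n\ge2$, $m+n\ge3$, and $a_1,\dots,a_n,c_1,\dots,c_m,b_1,\dots,b_n,d_1,\dots,d_m$ distinct. $P_i$ ($1\le i\le n$) is a path of length $\ell/2-2$ between $a_i,b_i$; $Q_i$ ($1\le i\le m$) a path of length $\ell/2-1$ between $c_i,d_i$; all pairwise disjoint. $A$ on $\{a_i\}\cup\{c_j\}$ and $B$ on $\{b_i\}\cup\{d_j\}$: $\{c_j\},\{d_j\}$ cliques; $\{a_i\},\{b_i\}$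 stable; the bipartite graph of $A$ between $\{a_i\}$ and $\{c_j\}$ has no induced two-edge matching; $b_id_j$ is an edge iff $a_ic_j$ is not; some $a_i$ has degree zero in $A$ and some $b_i$ degree zero in $B$; no other edges. The $\ell$-frame is $A\cup B\cup\bigcup P_i\cup\bigcup Q_j$; the apexed $\ell$-frame adds a new vertex adjacent exactly to $V(A)$ and a new vertex adjacent exactly to $V(B)$. *)

From Stdlib Require Import Relations.
From mathcomp Require Import all_boot.
Set Implicit Arguments. Unset Strict Implicit. Unset Printing Implicit Defensive.

Definition is_hole (V : finType) (e : rel V) (C : {set V}) : Prop :=
  exists (k : nat) (c : 'I_k -> V),
    [/\ 4 <= k, injective c, C = [set c i | i : 'I_k] &
        forall i j : 'I_k,
          e (c i) (c j) = (j == (i.+1 %% k) :> nat) || (i == (j.+1 %% k) :> nat)].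

Definition holes_close (V : finType) (C D : {set V}) : Prop := 4 <= #|C :&: D|.

Definition holes_equivalent (V : finType) (e : rel V) (C D : {set V}) : Prop :=
  clos_refl_trans_1n {set V}
    (fun X Y => [/\ is_hole e X, is_hole e Y & holes_close X Y]) C D.

Definition connected_on (T : finType) (A : rel T) (S : {set T}) : bool :=
  [forall x in S, forall y in S,
    connect [rel u v | [&& A u v, u \in S & v \in S]] x y].

Definition gconnected (T : finType) (A : rel T) : bool := connected_on A setT.

Definition two_connected (T : finType) (A : rel T) : Prop :=
  [/\ 3 <= #|T|, gconnected A & forall v : T, connected_on A (~: [set v])].

Definition simple_graph (T : finType) (A : rel T) : Prop :=
  irreflexive A /\ symmetric A.

(* threshold: no induced P4, C4, or complement of C4 (= 2K2) *)
Definition threshold (T : finType) (A : rel T) : Prop :=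
  forall w x y z : T, uniq [:: w; x; y; z] ->
    [/\ ~ [/\ A w x, A x y, A y z & [&& ~~ A w y, ~~ A w z & ~~ A x z]],
        ~ [/\ A w x, A x y, A y z & [&& A z w, ~~ A w y & ~~ A x z]] &
        ~ [/\ A w x, A y z & [&& ~~ A w y, ~~ A w z, ~~ A x y & ~~ A x z]]].

Definition consec (s t : nat) : bool := (s.+1 == t) || (t.+1 == s).

(* Vertices: Some (i, s) is the s-th vertex of the path P_i (s = 0 is a_i,
   s = L := (l-3)/2 is b_i); None is the apex. *)
Definition odd_frame_rel0 (k L : nat) (A : rel 'I_k) (apexA : bool)
    (x y : option ('I_k * 'I_L.+1)) : bool :=
  match x, y with
  | Some (i, s), Some (j, t) =>
      ((i == j) && consec s t)
      || ((i != j) && (((s == 0 :> nat) && (t == 0 :> nat) && A i j)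
                       || ((s == L :> nat) && (t == L :> nat) && ~~ A i j)))
  | None, Some (_, t) => if apexA then t == 0 :> nat else t == L :> nat
  | _, _ => false
  end.

Definition odd_frame_rel k L A apexA : rel (option ('I_k * 'I_L.+1)) :=
  fun x y => @odd_frame_rel0 k L A apexA x y || @odd_frame_rel0 k L A apexA y x.

(* B: b_i b_j is an edge iff a_i a_j is not (i != j) *)
Definition compl_rel (T : finType) (A : rel T) : rel T :=
  fun i j => (i != j) && ~~ A i j.

Definition apexed_odd_frame (l : nat) (V : finType) (e : rel V) : Prop :=
  exists (k : nat) (A : rel 'I_k)
         (f : option ('I_k * 'I_((l - 3)./2).+1) -> V),
    3 <= k /\ simple_graph A /\ threshold A /\ threshold (compl_rel A) /\
        (~~ gconnected A \/ two_connected A) /\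
        (~~ gconnected (compl_rel A) \/ two_connected (compl_rel A)) /\
        bijective f /\
        forall x y, e (f x) (f y) =
          @odd_frame_rel k ((l - 3)./2) A (~~ gconnected A) x y.

(* Vertices: inl (inl (i, s)) = s-th vertex of P_i (s = 0: a_i, s = L1: b_i),
   inl (inr (j, t)) = t-th vertex of Q_j (t = 0: c_j, t = L2: d_j),
   inr true = apex adjacent to V(A), inr false = apex adjacent to V(B).
   R i j : a_i c_j is an edge of A. *)
Definition even_frame_rel0 (n m L1 L2 : nat) (R : 'I_n -> 'I_m -> bool)
    (x y : ('I_n * 'I_L1.+1) + ('I_m * 'I_L2.+1) + bool) : bool :=
  match x, y with
  | inl (inl (i, s)), inl (inl (j, t)) => (i == j) && consec s t
  | inl (inr (i, s)), inl (inr (j, t)) =>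
      ((i == j) && consec s t)
      || ((i != j) && (((s == 0 :> nat) && (t == 0 :> nat))
                       || ((s == L2 :> nat) && (t == L2 :> nat))))
  | inl (inl (i, s)), inl (inr (j, t)) =>
      ((s == 0 :> nat) && (t == 0 :> nat) && R i j)
      || ((s == L1 :> nat) && (t == L2 :> nat) && ~~ R i j)
  | inr true, inl (inl (_, s)) => s == 0 :> nat
  | inr false, inl (inl (_, s)) => s == L1 :> nat
  | inr true, inl (inr (_, t)) => t == 0 :> nat
  | inr false, inl (inr (_, t)) => t == L2 :> nat
  | _, _ => false
  end.

Definition even_frame_rel n m L1 L2 R :
    rel (('I_n * 'I_L1.+1) + ('I_m * 'I_L2.+1) + bool) :=
  fun x y => @even_frame_rel0 n m L1 L2 R x y || @even_frame_rel0 n m L1 L2 R y x.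

Definition apexed_even_frame (l : nat) (V : finType) (e : rel V) : Prop :=
  exists (n m : nat) (R : 'I_n -> 'I_m -> bool)
    (f : ('I_n * 'I_(l./2 - 2).+1) + ('I_m * 'I_(l./2 - 1).+1) + bool -> V),
    2 <= n /\ 3 <= m + n /\
        (* no induced two-edge matching in the bipartite graph of A *)
        (forall (i i' : 'I_n) (j j' : 'I_m), i != i' -> j != j' ->
            ~ [/\ R i j, R i' j', ~~ R i j' & ~~ R i' j]) /\
        (exists i : 'I_n, forall j, ~~ R i j) /\
        (exists i : 'I_n, forall j, R i j) /\
        bijective f /\
        forall x y, e (f x) (f y) =
          @even_frame_rel n m (l./2 - 2) (l./2 - 1) R x y.

Definition apexed_frame (l : nat) (V : finType) (e : rel V) : Prop :=
  if odd l then apexed_odd_frame l e else apexed_even_frame l e.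

(* Outside the interiors of its paths, each side of a frame induces a graph without holes:
   a threshold graph in the odd case, a split graph in the even case, plus possibly an apex
   adjacent to all of it. Hence every hole meets the interior of some path and then contains
   the whole path. Leaving the far end of that path, the hole shares four vertices with one
   of a few explicit canonical holes made of one or two paths and an apex. Canonical holes
   sharing the beginning of a path and an apex are close; in the odd case the canonical holes
   are indexed by the edges of the side without the apex, which is connected since the other
   side is not, so all of them are equivalent. *)

From Stdlib Require Import Relations FunctionalExtensionality.
From mathcomp Require Import all_boot zify.
Set Implicit Arguments. Unset Strict Implicit. Unset Printing Implicit Defensive.

Lemma succ_modn a K : a < K -> a.+1 %% K = if a.+1 == K then 0 else a.+1.
Proof.
move=> aK; case: ifP => [/eqP ->|neq]; first by rewrite modnn.
by rewrite modn_small //; lia.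
Qed.

Ltac case_ifs := repeat match goal with
 | |- context [if ?b then _ else _] =>
     lazymatch b with context [if _ then _ else _] => fail | _ => case: (boolP b) => ? end
 end.

(** * Holes and their equivalence *)

Definition holes_all_equivalent (V : finType) (e : rel V) : Prop :=
  forall C D, is_hole e C -> is_hole e D -> holes_equivalent e C D.

Section Holes.
Variables (V : finType) (e : rel V).

Lemma holes_equivalent_trans C D E :
  holes_equivalent e C D -> holes_equivalent e D E -> holes_equivalent e C E.
Proof. by elim=> [//|X Y Z hXY _ IH] /IH; apply: Relation_Operators.rt1n_trans. Qed.

Lemma close_holes_equivalent C D :
  is_hole e C -> is_hole e D -> holes_close C D -> holes_equivalent e C D.
Proof. by move=> hC hD cCD; apply: Relation_Operators.rt1n_trans (rt1n_refl _ _ _). Qed.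

Lemma holes_equivalent_sym C D : holes_equivalent e C D -> holes_equivalent e D C.
Proof.
elim=> [|X Y Z [hX hY cXY] _ IH]; first exact: rt1n_refl.
by apply: holes_equivalent_trans IH _; apply: close_holes_equivalent; rewrite // /holes_close setIC.
Qed.

Lemma holes_all_equivalent_hub H :
  (forall C, is_hole e C -> holes_equivalent e H C) -> holes_all_equivalent e.
Proof. by move=> hub C D /hub /holes_equivalent_sym hC /hub; apply: holes_equivalent_trans. Qed.

Lemma holes_close_uniq4 (C D : {set V}) a b c d : uniq [:: a; b; c; d] ->
  a \in C -> b \in C -> c \in C -> d \in C ->
  a \in D -> b \in D -> c \in D -> d \in D -> holes_close C D.
Proof.
move=> abcd *; rewrite /holes_close -[4]/(size [:: a; b; c; d]) -(card_uniqP abcd).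
by apply: subset_leq_card; apply/subsetP => x; rewrite !inE => /or4P [] /eqP ->; apply/andP.
Qed.

Lemma hole_nbrs C x : is_hole e C -> x \in C ->
  exists u w, [/\ u \in C, w \in C, u != w, e x u & e x w] /\ ~~ e u w /\
    forall y, y \in C -> e x y -> y = u \/ y = w.
Proof.
case=> k [c [k4 injc -> ec]] /imsetP [t _ ->].
have tk := ltn_ord t.
have nxt : (if t.+1 == k then 0 else t.+1) < k by case: ifP => ?; lia.
have prv : (if t == 0 :> nat then k.-1 else t.-1) < k by case: ifP => ?; lia.
exists (c (Ordinal nxt)), (c (Ordinal prv)); split; [split|split].
- exact: imset_f.
- exact: imset_f.
- by rewrite (inj_eq injc); apply/eqP => /(congr1 val) /=; case_ifs; lia.
- by rewrite ec (succ_modn tk) eqxx.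
- by rewrite ec (succ_modn prv) /=; case_ifs; lia.
- by rewrite ec (succ_modn nxt) (succ_modn prv) /=; case_ifs; lia.
move=> y /imsetP [j _ ->]; have jk := ltn_ord j.
rewrite ec (succ_modn tk) (succ_modn jk) => /orP [h|h]; [left|right];
  congr c; apply: val_inj => /=; move: h; case_ifs; lia.
Qed.

Lemma hole_nonempty C : is_hole e C -> exists x, x \in C.
Proof.
case=> k [c [k4 _ -> _]]; have k0 : 0 < k by lia.
by exists (c (Ordinal k0)); apply: imset_f.
Qed.

Lemma hole_nbrs_in C x p q : is_hole e C -> x \in C ->
  (forall y, e x y -> y = p \/ y = q) -> p \in C /\ q \in C.
Proof.
move=> hC xC nbr; have [u [w [[uC wC uw xu xw] _]]] := hole_nbrs hC xC.
by case: (nbr _ xu) => Eu; case: (nbr _ xw) => Ew; subst; rewrite ?eqxx in uw.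
Qed.

Lemma hole_path_in C (f : nat -> V) L s : is_hole e C ->
  (forall t y, 0 < t < L -> e (f t) y -> y = f t.-1 \/ y = f t.+1) ->
  0 < s < L -> f s \in C -> forall t, t <= L -> f t \in C.
Proof.
move=> hC nbr sL sC.
have step t : 0 < t < L -> f t \in C -> f t.-1 \in C /\ f t.+1 \in C.
  by move=> tL tC; apply: hole_nbrs_in hC tC (nbr t^~ tL).
have up d : s + d <= L -> f (s + d) \in C.
  elim: d => [|d IH] h; first by rewrite addn0.
  by rewrite addnS; case: (step (s + d) ltac:(lia) (IH ltac:(lia))).
have down d : d <= s -> f (s - d) \in C.
  elim: d => [|d IH] h; first by rewrite subn0.
  by rewrite subnS; case: (step (s - d) ltac:(lia) (IH ltac:(lia))).
move=> t tL; case: (leqP s t) => st.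
- by rewrite -(subnKC st); apply: up; lia.
- by have := down (s - t) ltac:(lia); rewrite subKn //; apply: ltnW.
Qed.

Hypothesis e_sym : symmetric e.

Lemma hole_other_nbr C x v : is_hole e C -> x \in C -> v \in C -> e x v ->
  exists y, [/\ y \in C, y != v, e x y & ~~ e v y].
Proof.
move=> hC xC vC xv; have [u [w [[uC wC uw xu xw] [nuw nbr]]]] := hole_nbrs hC xC.
case: (nbr _ vC xv) => ->.
- by exists w; rewrite eq_sym.
- by exists u; rewrite (e_sym w).
Qed.

Lemma hole_nbr2 C x : is_hole e C -> x \in C ->
  exists u y, [/\ u \in C, y \in C & y != x] /\ [/\ e x u, e u y & ~~ e x y].
Proof.
move=> hC xC; have [u [w [[uC _ _ xu _] _]]] := hole_nbrs hC xC.
have ux : e u x by rewrite e_sym.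
have [y [yC yx uy nxy]] := hole_other_nbr hC uC xC ux.
by exists u, y.
Qed.

Hypothesis e_irr : irreflexive e.

(* Around [phi i] the hole runs [p' - p - i - q] with [i p'] and [p q] non-edges, so
   [Z] would contain an induced P4 or, if [q p'] is an edge, an induced C4. *)
Lemma threshold_notin_hole C n (Z : rel 'I_n) (phi : 'I_n -> V) :
  is_hole e C -> threshold Z ->
  (forall p q, p != q -> e (phi p) (phi q) = Z p q) ->
  (forall p y, phi p \in C -> y \in C -> e (phi p) y -> exists q, y = phi q) ->
  forall i, phi i \notin C.
Proof.
move=> hC thZ eZ closed i; apply/negP => iC.
have neq a b : e (phi a) (phi b) -> a != b by apply: contraTneq => ->; rewrite e_irr.
have [u [w [[uC wC uw iu iw] [nuw _]]]] := hole_nbrs hC iC.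
have [p Ep] := closed _ _ iC uC iu; have [q Eq] := closed _ _ iC wC iw; subst u w.
have pi : e (phi p) (phi i) by rewrite e_sym.
have [y [yC yi py niy]] := hole_other_nbr hC uC iC pi.
have [p' Ep'] := closed _ _ uC yC py; subst y.
have ip := neq _ _ iu; have iq := neq _ _ iw; have pp' := neq _ _ py.
have pq : p != q by apply: contraNneq uw => ->.
have ip' : i != p' by apply: contraNneq yi => ->.
have qp' : q != p' by apply: contraNneq nuw => ->.
have Z_sym a b : a != b -> Z b a = Z a b.
  by move=> ab; rewrite -eZ 1?eq_sym // -eZ // e_sym.
have [Zip Ziq Zpp'] : [/\ Z i p, Z i q & Z p p'] by rewrite -!eZ.
have [nZpq nZip'] : ~~ Z p q /\ ~~ Z i p' by rewrite -!eZ.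
case: (boolP (Z q p')) => Zqp'.
- have := thZ i p p' q; rewrite /= !inE !negb_or ip ip' iq pp' pq (eq_sym p') qp'.
  case=> // _ noC4 _; apply: noC4; split; [done|done|by rewrite Z_sym|].
  by rewrite (Z_sym i q iq) Ziq nZip' nZpq.
- have := thZ q i p p'; rewrite /= !inE !negb_or (eq_sym q) iq (eq_sym q) pq qp' ip ip' pp'.
  case=> // noP4 _ _; apply: noP4; split; [by rewrite (Z_sym i q iq)|done|done|].
  by rewrite (Z_sym p q pq) nZpq (negbTE Zqp') nZip'.
Qed.

Lemma mem_cycle_set K (c : nat -> V) a x : a < K -> c a = x -> x \in [set c (val b) | b : 'I_K].
Proof. by move=> aK <-; apply/imsetP; exists (Ordinal aK). Qed.

Lemma cycle_set_hole K (c : nat -> V) (pos : V -> nat) : 4 <= K ->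
  (forall a, a < K -> pos (c a) = a) ->
  (forall a b, a < K -> b < K -> e (c a) (c b) = (b == a.+1 %% K) || (a == b.+1 %% K)) ->
  is_hole e [set c (val b) | b : 'I_K].
Proof.
move=> K4 posK adj; exists K, (fun a => c (val a)); split => // [a b|a b].
- by move/(congr1 pos); rewrite !posK ?ltn_ord // => /val_inj.
- exact: adj (ltn_ord a) (ltn_ord b).
Qed.

End Holes.

Lemma holes_all_equivalent_iso (W V : finType) (r : rel W) (e : rel V) (f : W -> V) :
  bijective f -> (forall x y, e (f x) (f y) = r x y) ->
  holes_all_equivalent r -> holes_all_equivalent e.
Proof.
case=> g gK fK ef allr.
have f_inj : injective f := can_inj gK.
have hole_img (T U : finType) (s : rel T) (t : rel U) (h : T -> U) C :
    injective h -> (forall x y, t (h x) (h y) = s x y) -> is_hole s C -> is_hole t (h @: C).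
  move=> h_inj st [k [c [k4 c_inj -> sc]]]; exists k, (h \o c).
  by split; [|exact: inj_comp|rewrite -imset_comp|move=> i j; rewrite /= st sc].
have g_hole C : is_hole e C -> is_hole r (g @: C).
  by apply: hole_img (can_inj fK) _ => x y; rewrite -ef !fK.
have f_equiv X Y : holes_equivalent r X Y -> holes_equivalent e (f @: X) (f @: Y).
  elim=> [Z|X1 Y1 Z1 [h1 h2 c12] _ IH]; first exact: rt1n_refl.
  apply: Relation_Operators.rt1n_trans IH.
  split; [exact: hole_img f_inj ef h1|exact: hole_img f_inj ef h2|].
  by rewrite /holes_close -imsetI ?card_imset // => x y _ _; apply: f_inj.
have fgK (C : {set V}) : f @: (g @: C) = C.
  by rewrite -imset_comp (eq_imset _ fK) imset_id.
by move=> C D hC hD; rewrite -(fgK C) -(fgK D); apply/f_equiv/allr; apply: g_hole.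
Qed.

(** * Complementary graphs *)

Lemma gconnectedE (T : finType) (A : rel T) : gconnected A <-> forall x y, connect A x y.
Proof.
have eA : [rel u v | [&& A u v, u \in setT & v \in setT]] =2 A.
  by move=> u v; rewrite /= !in_setT !andbT.
split => [/forall_inP conn x y|conn].
- by have /forall_inP/(_ y (in_setT y)) := conn x (in_setT x); rewrite (eq_connect eA).
- by apply/forall_inP => x _; apply/forall_inP => y _; rewrite (eq_connect eA).
Qed.

Section Complement.
Variables (T : finType) (A : rel T).

Lemma compl_rel_sym : symmetric A -> symmetric (compl_rel A).
Proof. by move=> A_sym x y; rewrite /compl_rel eq_sym A_sym. Qed.

Lemma compl_relK : irreflexive A -> compl_rel (compl_rel A) = A.
Proof.
move=> A_irr; apply: functional_extensionality => x; apply: functional_extensionality => y.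
by rewrite /compl_rel; case: eqP => [->|_] /=; rewrite ?A_irr ?negbK.
Qed.

(* Vertices in different components of [A] are adjacent in the complement; two vertices
   in the same component are both adjacent there to any vertex of another component. *)
Lemma compl_rel_gconnected : symmetric A -> ~~ gconnected A -> gconnected (compl_rel A).
Proof.
move=> A_sym /negP disconn.
have cA : connect_sym A := sym_connect_sym A_sym.
have [x [y nxy]] : exists x y, ~~ connect A x y.
  case: (boolP [exists x, [exists y, ~~ connect A x y]]).
    by case/existsP=> x /existsP [y nxy]; exists x, y.
  move=> /existsPn nconn; case: disconn; apply/gconnectedE => x y.
  by have /existsPn/(_ y) := nconn x; rewrite negbK.
have compl_of_nconn a b : ~~ connect A a b -> connect (compl_rel A) a b.
  move=> nab; apply: connect1; apply/andP; split.
  - by apply: contraNneq nab => ->; rewrite connect0.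
  - by apply: contra nab => /connect1.
apply/gconnectedE => u v; case: (boolP (connect A u v)) => [cuv|]; last exact: compl_of_nconn.
have [w [nuw nvw]] : exists w, ~~ connect A u w /\ ~~ connect A v w.
  case: (boolP (connect A u x)) => cux; last first.
    by exists x; split => //; apply: contra cux; apply: connect_trans cuv.
  exists y; rewrite cA in cux; split; apply: contra nxy; first exact: connect_trans cux.
  by apply: connect_trans; apply: connect_trans cux cuv.
apply: connect_trans (compl_of_nconn _ _ nuw) _.
by rewrite (sym_connect_sym (compl_rel_sym A_sym)); apply: compl_of_nconn.
Qed.

End Complement.

(** * Odd frames *)

Section OddFrame.
Variables (k L : nat) (X : rel 'I_k).
Hypotheses (L_ge2 : 2 <= L) (X_sym : symmetric X).
Hypotheses (X_thr : threshold X) (Y_thr : threshold (compl_rel X)).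
Hypothesis Y_conn : gconnected (compl_rel X).

Local Notation T := (option ('I_k * 'I_L.+1)).
Local Notation r := (@odd_frame_rel k L X true).

Definition odd_vtx (i : 'I_k) (t : nat) : T := Some (i, inord t).
Local Notation pv := odd_vtx.

Lemma odd_rel_sym : symmetric r.
Proof. by move=> x y; rewrite /odd_frame_rel orbC. Qed.

Lemma odd_relSS i j (s t : 'I_L.+1) : r (Some (i, s)) (Some (j, t)) =
  (i == j) && consec s t || (i != j) &&
    ((s == 0 :> nat) && (t == 0 :> nat) && X i j || (s == L :> nat) && (t == L :> nat) && ~~ X i j).
Proof.
rewrite /odd_frame_rel /= (eq_sym j i) (X_sym j i) /consec.
by case: (i == j); case: (X i j) => /=; lia.
Qed.

Lemma odd_relNS i (t : 'I_L.+1) : r None (Some (i, t)) = (t == 0 :> nat).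
Proof. by rewrite /odd_frame_rel /= orbF. Qed.

Lemma odd_rel_irr : irreflexive r.
Proof. by case=> [[i s]|] //; rewrite odd_relSS eqxx /consec /=; lia. Qed.

Lemma odd_vtxE i (s : 'I_L.+1) : Some (i, s) = pv i s.
Proof. by rewrite /odd_vtx inord_val. Qed.

Lemma odd_vtx_eq i j s t : s <= L -> t <= L -> (pv i s == pv j t) = (i == j) && (s == t).
Proof.
move=> sL tL; apply/eqP/andP => [[-> /(congr1 val)]|[/eqP -> /eqP ->]] //=.
by rewrite !inordK // => ->.
Qed.

Lemma odd_relpp i j s t : s <= L -> t <= L -> r (pv i s) (pv j t) =
  (i == j) && consec s t ||
  (i != j) && ((s == 0) && (t == 0) && X i j || (s == L) && (t == L) && ~~ X i j).
Proof. by move=> sL tL; rewrite odd_relSS !inordK. Qed.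

Lemma odd_relNp i t : t <= L -> r None (pv i t) = (t == 0).
Proof. by move=> tL; rewrite odd_relNS inordK. Qed.

Lemma odd_relpN i t : t <= L -> r (pv i t) None = (t == 0).
Proof. by move=> tL; rewrite odd_rel_sym odd_relNp. Qed.

Lemma odd_nbr_interior i t y : 0 < t < L -> r (pv i t) y -> y = pv i t.-1 \/ y = pv i t.+1.
Proof.
move=> tL; case: y => [[j s]|]; last by rewrite odd_relpN; lia.
have sL := ltn_ord s; rewrite odd_vtxE odd_relpp; [|lia|lia].
case: (i =P j) => [<-|_] /=; last by case: (X i j) => /=; lia.
rewrite /consec => adj; have [->|->] : nat_of_ord s = t.+1 \/ nat_of_ord s = t.-1 by lia.
- by right.
- by left.
Qed.

Lemma odd_nbr_end i y : r (pv i L) y ->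
  y = pv i L.-1 \/ exists2 j, compl_rel X i j & y = pv j L.
Proof.
case: y => [[j s]|]; last by rewrite odd_relpN; lia.
have sL := ltn_ord s; rewrite odd_vtxE odd_relpp; [|lia|lia].
case: (i =P j) => [<-|/eqP ij] /=.
- by rewrite /consec => adj; left; congr pv; lia.
- case nX: (X i j) => /= adj; first lia.
  have -> : nat_of_ord s = L by lia.
  by right; exists j; rewrite // /compl_rel ij nX.
Qed.

Definition odd_interior (x : T) : bool := if x is Some (_, s) then 0 < s < L else false.

Section OddNoInterior.
Variable C : {set T}.
Hypotheses (hC : is_hole r C) (no_int : {in C, forall x, ~~ odd_interior x}).

Lemma odd_apex_notin_hole : None \notin C.
Proof.
apply/negP => NC; have [[[i s]|] [y [[uC yC yN] [Nu uy nNy]]]] := hole_nbr2 odd_rel_sym hC NC;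
  last by rewrite odd_rel_irr in Nu.
case: y yC yN uy nNy => [[j t]|] // yC _; rewrite odd_relSS !odd_relNS in Nu *.
have := no_int yC; have := ltn_ord t; move: Nu => /=.
by case: (i == j); case: (X i j) => /=; rewrite /consec; lia.
Qed.

Lemma odd_end_notin_hole i s : Some (i, s) \notin C.
Proof.
apply/negP => xC; have s_end : (s == 0 :> nat) || (s == L :> nat).
  by have := no_int xC; have := ltn_ord s; rewrite /=; lia.
have closed p y : Some (p, s) \in C -> y \in C -> r (Some (p, s)) y -> exists q, y = Some (q, s).
  case: y => [[q t]|] pC yC; last by rewrite (negbTE odd_apex_notin_hole) in yC.
  have := no_int yC; have := ltn_ord t; have := ltn_ord s; move: s_end => /=.
  rewrite odd_relSS /consec => + + + +; case: (p == q); case: (X p q) => /= *;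
    try (exfalso; lia); exists q; congr (Some (_, _)); apply: val_inj => /=; lia.
have end_rel (Z : rel 'I_k) : threshold Z ->
    (forall p q, p != q -> r (Some (p, s)) (Some (q, s)) = Z p q) -> False.
  move=> Z_thr eZ; have := threshold_notin_hole odd_rel_sym odd_rel_irr hC Z_thr eZ closed i.
  by rewrite xC.
case/orP: s_end => /eqP s_val; [apply: (end_rel X)|apply: (end_rel (compl_rel X))] => // p q pq;
  rewrite odd_relSS (negbTE pq) /= ?/compl_rel ?pq s_val; lia.
Qed.

End OddNoInterior.

Lemma odd_hole_interior C : is_hole r C -> exists2 x, x \in C & odd_interior x.
Proof.
move=> hC; apply/exists_inP; apply: contraT => /exists_inP no_int.
have {}no_int : {in C, forall x, ~~ odd_interior x}.
  by move=> x xC; apply/negP => x_int; apply: no_int; exists x.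
have [[[i s]|] xC] := hole_nonempty hC.
- by rewrite (negbTE (odd_end_notin_hole hC no_int i s)) in xC.
- by rewrite (negbTE (odd_apex_notin_hole hC no_int)) in xC.
Qed.

Lemma odd_hole_path C i s : is_hole r C -> 0 < s < L -> pv i s \in C ->
  forall t, t <= L -> pv i t \in C.
Proof. by move=> hC; apply: hole_path_in hC _ => t y; apply: odd_nbr_interior. Qed.

(* The hole [a_i -P_i- b_i b_j -P_j- a_j z], for [b_i b_j] an edge of [B]. *)
Definition odd_cyc (i j : 'I_k) (a : nat) : T :=
  if a <= L then pv i a else if a <= L.*2.+1 then pv j (L.*2.+1 - a) else None.

Definition odd_hole (i j : 'I_k) : {set T} := [set odd_cyc i j (val a) | a : 'I_(L.*2 + 3)].

Lemma odd_hole_is_hole i j : compl_rel X i j -> is_hole r (odd_hole i j).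
Proof.
case/andP=> ij nX; have ji : (j == i) = false by rewrite eq_sym (negbTE ij).
pose pos (x : T) := if x is Some (p, t) then (if p == i then val t else L.*2.+1 - t) else L.*2.+2.
apply: (cycle_set_hole (pos := pos)) => [|a aK|a b aK bK]; first lia.
- rewrite /odd_cyc /odd_vtx; case_ifs; rewrite /= ?eqxx ?ji ?inordK; lia.
- have nXji : X j i = false by rewrite X_sym (negbTE nX).
  rewrite (succ_modn aK) (succ_modn bK) /odd_cyc; case_ifs;
    rewrite ?odd_relpp ?odd_relNp ?odd_relpN ?odd_rel_irr ?eqxx ?(negbTE ij) ?ji
            ?(negbTE nX) ?nXji /consec /=; lia.
Qed.

Lemma mem_odd_hole_l i j t : t <= L -> pv i t \in odd_hole i j.
Proof. by move=> tL; apply: (mem_cycle_set (a := t)); rewrite /odd_cyc ?tL //; lia. Qed.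

Lemma mem_odd_hole_r i j t : t <= L -> pv j t \in odd_hole i j.
Proof.
move=> tL; apply: (mem_cycle_set (a := L.*2.+1 - t)); first lia.
by rewrite /odd_cyc ifN ?ifT; [congr pv|..]; lia.
Qed.

Lemma mem_odd_hole_apex i j : None \in odd_hole i j.
Proof. by apply: (mem_cycle_set (a := L.*2.+2)); rewrite /odd_cyc ?ifN //; lia. Qed.

Lemma odd_hole_near C : is_hole r C ->
  exists i j, compl_rel X i j /\ holes_close C (odd_hole i j).
Proof.
move=> hC; have [[[i s]|//] sC /= sL] := odd_hole_interior hC.
rewrite odd_vtxE in sC; have onC := odd_hole_path hC sL sC.
have bi_b'i : r (pv i L) (pv i L.-1) by rewrite odd_relpp ?eqxx /consec /=; lia.
have [y [yC yb' b_y _]] :=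
  hole_other_nbr odd_rel_sym hC (onC L (leqnn _)) (onC L.-1 (leq_pred _)) bi_b'i.
case: (odd_nbr_end b_y) => [yE|[j Yij yE]]; first by rewrite yE eqxx in yb'.
exists i, j; split => //; subst y; case/andP: Yij => ij _.
apply: (@holes_close_uniq4 _ _ _ (pv i 0) (pv i 1) (pv i 2) (pv j L)).
  by rewrite /= !inE !odd_vtx_eq ?eqxx ?(negbTE ij) //=; lia.
all: by rewrite ?yC ?onC ?mem_odd_hole_l ?mem_odd_hole_r //; lia.
Qed.

Lemma odd_holes_equivalent_hub i0 j0 : compl_rel X i0 j0 ->
  forall u v, compl_rel X u v -> holes_equivalent r (odd_hole i0 j0) (odd_hole u v).
Proof.
have uniq4 u : uniq [:: pv u 0; pv u 1; pv u 2; None].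
  by rewrite /= !inE !odd_vtx_eq ?eqxx //=; lia.
have close u v w : compl_rel X u v -> compl_rel X u w ->
    holes_equivalent r (odd_hole u v) (odd_hole u w).
  move=> Yuv Yuw; apply: close_holes_equivalent; try exact: odd_hole_is_hole.
  by apply: (holes_close_uniq4 (uniq4 u)); rewrite ?mem_odd_hole_l ?mem_odd_hole_apex //; lia.
have close_sym u v : compl_rel X u v -> holes_equivalent r (odd_hole u v) (odd_hole v u).
  move=> Yuv; have Yvu : compl_rel X v u by rewrite (compl_rel_sym X_sym).
  apply: close_holes_equivalent; try exact: odd_hole_is_hole.
  by apply: (holes_close_uniq4 (uniq4 u));
    rewrite ?mem_odd_hole_l ?mem_odd_hole_r ?mem_odd_hole_apex //; lia.
move=> Y0; pose reach u := forall v, compl_rel X u v ->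
  holes_equivalent r (odd_hole i0 j0) (odd_hole u v).
have reach_step u w : reach u -> compl_rel X u w -> reach w.
  move=> ru Yuw v Ywv; apply: holes_equivalent_trans (ru w Yuw) _.
  have Ywu : compl_rel X w u by rewrite (compl_rel_sym X_sym).
  exact: holes_equivalent_trans (close_sym _ _ Yuw) (close _ _ _ Ywu Ywv).
have reach_path x p : reach x ->
    path (compl_rel X) x p -> reach (last x p).
  elim: p x => [|y p IH] x //= rx /andP [Yxy Yp].
  exact: IH (reach_step _ _ rx Yxy) Yp.
move=> u; have /gconnectedE/(_ i0 u)/connectP [p Yp ->] := Y_conn.
apply: reach_path Yp; move=> v; exact: close Y0.
Qed.

Lemma odd_frame_holes_equivalent : holes_all_equivalent r.
Proof.
move=> C D hC; have [i0 [j0 [Y0 _]]] := odd_hole_near hC; move: C D hC.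
apply: (holes_all_equivalent_hub (H := odd_hole i0 j0)) => E hE.
have [i [j [Yij cE]]] := odd_hole_near hE.
apply: holes_equivalent_trans (odd_holes_equivalent_hub Y0 Yij) _.
by apply/holes_equivalent_sym/close_holes_equivalent => //; apply: odd_hole_is_hole.
Qed.

End OddFrame.

Definition frame_flip (k L : nat) (x : option ('I_k * 'I_L.+1)) : option ('I_k * 'I_L.+1) :=
  if x is Some (i, s) then Some (i, rev_ord s) else None.

Lemma frame_flipK (k L : nat) : involutive (@frame_flip k L).
Proof. by case=> [[i s]|] //=; rewrite rev_ordK. Qed.

Lemma odd_frame_rel_flip (k L : nat) (A : rel 'I_k) : symmetric A -> forall x y,
  @odd_frame_rel k L A false (frame_flip x) (frame_flip y) =
  @odd_frame_rel k L (compl_rel A) true x y.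
Proof.
move=> A_sym [[i s]|] [[j t]|] //=; rewrite /odd_frame_rel /= /compl_rel /consec ?orbF.
- have := ltn_ord s; have := ltn_ord t; rewrite (eq_sym j i) (A_sym j i).
  by case: (i == j); case: (A i j) => /=; lia.
- by have := ltn_ord s; lia.
- by have := ltn_ord t; lia.
Qed.

(** * Even frames *)

Section EvenFrame.
Variables (n m L1 L2 : nat) (R : 'I_n -> 'I_m -> bool).
Hypotheses (L1_ge2 : 2 <= L1) (L2_ge3 : 3 <= L2) (n_gt1 : 1 < n).

Local Notation T := (('I_n * 'I_L1.+1) + ('I_m * 'I_L2.+1) + bool)%type.
Local Notation re := (@even_frame_rel n m L1 L2 R).
Definition even_pv (i : 'I_n) (t : nat) : T := inl (inl (i, inord t)).
Definition even_qv (j : 'I_m) (t : nat) : T := inl (inr (j, inord t)).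
Local Notation Pv := even_pv.
Local Notation Qv := even_qv.
Local Notation zA := (inr true : T).
Local Notation zB := (inr false : T).

Lemma even_rel_sym : symmetric re.
Proof. by move=> x y; rewrite /even_frame_rel orbC. Qed.

Lemma even_relPP i i' s t : s <= L1 -> t <= L1 -> re (Pv i s) (Pv i' t) = (i == i') && consec s t.
Proof. by move=> sL tL; rewrite /even_frame_rel /= !inordK // (eq_sym i') /consec; lia. Qed.

Lemma even_relQQ j j' s t : s <= L2 -> t <= L2 -> re (Qv j s) (Qv j' t) =
  (j == j') && consec s t || (j != j') && ((s == 0) && (t == 0) || (s == L2) && (t == L2)).
Proof. by move=> sL tL; rewrite /even_frame_rel /= !inordK // (eq_sym j') /consec; lia. Qed.

Lemma even_relPQ i j s t : s <= L1 -> t <= L2 -> re (Pv i s) (Qv j t) =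
  (s == 0) && (t == 0) && R i j || (s == L1) && (t == L2) && ~~ R i j.
Proof. by move=> sL tL; rewrite /even_frame_rel /= !inordK // orbF. Qed.

Lemma even_relQP i j s t : s <= L1 -> t <= L2 -> re (Qv j t) (Pv i s) =
  (s == 0) && (t == 0) && R i j || (s == L1) && (t == L2) && ~~ R i j.
Proof. by move=> sL tL; rewrite even_rel_sym even_relPQ. Qed.

Lemma even_rel_apexP b i s : s <= L1 -> re (inr b) (Pv i s) = (s == if b then 0 else L1).
Proof. by move=> sL; case: b; rewrite /even_frame_rel /= !inordK // orbF. Qed.

Lemma even_relP_apex b i s : s <= L1 -> re (Pv i s) (inr b) = (s == if b then 0 else L1).
Proof. by move=> sL; rewrite even_rel_sym even_rel_apexP. Qed.

Lemma even_rel_apexQ b j s : s <= L2 -> re (inr b) (Qv j s) = (s == if b then 0 else L2).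
Proof. by move=> sL; case: b; rewrite /even_frame_rel /= !inordK // orbF. Qed.

Lemma even_relQ_apex b j s : s <= L2 -> re (Qv j s) (inr b) = (s == if b then 0 else L2).
Proof. by move=> sL; rewrite even_rel_sym even_rel_apexQ. Qed.

Lemma even_rel_apexes b c : re (inr b) (inr c) = false.
Proof. by case: b; case: c. Qed.

Lemma even_pvE i (s : 'I_L1.+1) : inl (inl (i, s)) = Pv i s.
Proof. by rewrite /even_pv inord_val. Qed.

Lemma even_qvE j (s : 'I_L2.+1) : inl (inr (j, s)) = Qv j s.
Proof. by rewrite /even_qv inord_val. Qed.

Lemma even_pv_eq i i' s t : s <= L1 -> t <= L1 -> (Pv i s == Pv i' t) = (i == i') && (s == t).
Proof.
move=> sL tL; apply/eqP/andP => [[-> /(congr1 val)]|[/eqP -> /eqP ->]] //=.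
by rewrite !inordK // => ->.
Qed.

Lemma even_qv_eq j j' s t : s <= L2 -> t <= L2 -> (Qv j s == Qv j' t) = (j == j') && (s == t).
Proof.
move=> sL tL; apply/eqP/andP => [[-> /(congr1 val)]|[/eqP -> /eqP ->]] //=.
by rewrite !inordK // => ->.
Qed.

Definition even_interior (x : T) : bool :=
  match x with
  | inl (inl (_, s)) => 0 < s < L1
  | inl (inr (_, t)) => 0 < t < L2
  | inr _ => false
  end.

Ltac ord_bounds := repeat match goal with |- context [nat_of_ord ?s] =>
  lazymatch goal with
  | _ : is_true (nat_of_ord s < _) |- _ => fail
  | _ => have := ltn_ord s; move=> ?
  end end.

Ltac bound_side := match goal with
  | |- is_true (nat_of_ord ?s <= _) => have := ltn_ord s; lia
  | |- is_true (_ <= _) => lia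
  end.

Ltac case_atoms := repeat match goal with
  | |- context [R ?a ?b] => case: (R a b)
  | |- context [@eq_op ?U ?a ?b] =>
      lazymatch type of a with nat => fail | _ => case: (@eq_op U a b) end
  end.

Ltac even_brute := rewrite ?even_pvE ?even_qvE ?even_relPP ?even_relQQ ?even_relPQ ?even_relQP
  ?even_rel_apexP ?even_relP_apex ?even_rel_apexQ ?even_relQ_apex ?even_rel_apexes
  ?even_pv_eq ?even_qv_eq ?eqxx /consec /=; rewrite ?inord_val; try bound_side;
  case_atoms; rewrite /=; try done; ord_bounds; try lia.

Ltac case_vtx x := case: x => [[[? ?]|[? ?]]|[]].

Section NoInteriorHole.
Variable C : {set T}.
Hypotheses (hC : is_hole re C) (no_int : {in C, forall x, ~~ even_interior x}).

Lemma even_apex_notin_hole b : inr b \notin C.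
Proof.
apply/negP => zC; have [u [y [[uC yC yz] [zu uy nzy]]]] := hole_nbr2 even_rel_sym hC zC.
have := no_int yC; have := no_int uC; move: yz zu uy nzy; clear zC uC yC.
by case: b; case_vtx u; case_vtx y; even_brute.
Qed.

Lemma even_hole_no_apex y : y \in C -> y \notin [:: zA; zB].
Proof.
by move=> yC; rewrite !inE; apply/norP; split; apply: contraTneq yC => ->;
  apply: even_apex_notin_hole.
Qed.

Lemma even_pend_notin_hole i s : s <= L1 -> Pv i s \notin C.
Proof.
move=> sL; apply/negP => xC; have := no_int xC; rewrite /= inordK // => s_end.
have [u [w [[uC wC uw xu xw] [nuw _]]]] := hole_nbrs hC xC.
have := no_int wC; have := no_int uC; have := even_hole_no_apex wC; have := even_hole_no_apex uC.
move: s_end xu xw uw nuw; rewrite !inE; clear xC uC wC.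
by case_vtx u; case_vtx w; even_brute.
Qed.

Lemma even_qend_notin_hole j t : t <= L2 -> Qv j t \notin C.
Proof.
move=> tL; apply/negP => xC; have := no_int xC; rewrite /= inordK // => t_end.
have [u [w [[uC wC uw xu xw] [nuw _]]]] := hole_nbrs hC xC.
have not_p y : y \in C -> if y is inl (inl _) then false else true.
  case: y => [[[i s]|//]|//]; rewrite even_pvE.
  by apply: contraTT => _; apply: even_pend_notin_hole; rewrite -ltnS.
have := not_p _ wC; have := not_p _ uC.
have := no_int wC; have := no_int uC; have := even_hole_no_apex wC; have := even_hole_no_apex uC.
move: t_end xu xw uw nuw; rewrite !inE; clear xC uC wC not_p.
by case_vtx u; case_vtx w; even_brute.
Qed.

End NoInteriorHole.

Lemma even_hole_interior C : is_hole re C -> exists2 x, x \in C & even_interior x.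
Proof.
move=> hC; apply/exists_inP; apply: contraT => /exists_inP no_int.
have {}no_int : {in C, forall x, ~~ even_interior x}.
  by move=> x xC; apply/negP => x_int; apply: no_int; exists x.
have [[[[i s]|[j s]]|b] xC] := hole_nonempty hC.
- by rewrite even_pvE (negbTE (even_pend_notin_hole hC no_int i (ltnSE (ltn_ord s)))) in xC.
- by rewrite even_qvE (negbTE (even_qend_notin_hole hC no_int j (ltnSE (ltn_ord s)))) in xC.
- by rewrite (negbTE (even_apex_notin_hole hC no_int b)) in xC.
Qed.

Lemma even_nbr_interiorP i t y : 0 < t < L1 -> re (Pv i t) y -> y = Pv i t.-1 \/ y = Pv i t.+1.
Proof.
move=> tL; case: y => [[[j s]|[j s]]|b]; rewrite ?even_pvE ?even_qvE.
- have sL := ltnSE (ltn_ord s); rewrite even_relPP; [|lia|done]; case: eqP => [<-|_] //= adj.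
  have [->|->] : nat_of_ord s = t.-1 \/ nat_of_ord s = t.+1 by rewrite /consec in adj; lia.
  + by left.
  + by right.
- by have sL := ltnSE (ltn_ord s); rewrite even_relPQ //; [case: (R i j) => /=|]; lia.
- by rewrite even_relP_apex; case: b; lia.
Qed.

Lemma even_nbr_interiorQ j t y : 0 < t < L2 -> re (Qv j t) y -> y = Qv j t.-1 \/ y = Qv j t.+1.
Proof.
move=> tL; case: y => [[[i s]|[i s]]|b]; rewrite ?even_pvE ?even_qvE.
- by have sL := ltnSE (ltn_ord s); rewrite even_relQP //; [case: (R i j) => /=|]; lia.
- have sL := ltnSE (ltn_ord s); rewrite even_relQQ; [|lia|done].
  case: eqP => [<-|_] /= adj; last lia.
  have [->|->] : nat_of_ord s = t.-1 \/ nat_of_ord s = t.+1 by rewrite /consec in adj; lia.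
  + by left.
  + by right.
- by rewrite even_relQ_apex; case: b; lia.
Qed.

Lemma even_nbr_end i y : re (Pv i L1) y ->
  [\/ y = Pv i L1.-1, y = zB | exists2 j, ~~ R i j & y = Qv j L2].
Proof.
case: y => [[[j s]|[j s]]|b]; rewrite ?even_pvE ?even_qvE.
- have sL := ltnSE (ltn_ord s); rewrite even_relPP //; case: eqP => [<-|_] //= adj.
  by apply: Or31; congr Pv; rewrite /consec in adj; lia.
- have sL := ltnSE (ltn_ord s); rewrite even_relPQ //; case Rij: (R i j) => /= adj; first lia.
  by apply: Or33; exists j; [rewrite Rij|congr Qv; lia].
- by rewrite even_relP_apex //; case: b => /=; [lia|move=> _; apply: Or32].
Qed.

Lemma even_hole_pathP C i s : is_hole re C -> 0 < s < L1 -> Pv i s \in C ->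
  forall t, t <= L1 -> Pv i t \in C.
Proof. by move=> hC; apply: hole_path_in hC _ => t y; apply: even_nbr_interiorP. Qed.

Lemma even_hole_pathQ C j s : is_hole re C -> 0 < s < L2 -> Qv j s \in C ->
  forall t, t <= L2 -> Qv j t \in C.
Proof. by move=> hC; apply: hole_path_in hC _ => t y; apply: even_nbr_interiorQ. Qed.

(* The holes [a_i -P_i- b_i z_B b_i' -P_i'- a_i' z_A], [a_i -P_i- b_i d_j -Q_j- c_j z_A]
   and [b_i -P_i- a_i c_j -Q_j- d_j z_B]. *)
Definition pp_cyc (i i' : 'I_n) (a : nat) : T :=
  if a <= L1 then Pv i a else if a == L1.+1 then zB
  else if a <= L1.*2.+2 then Pv i' (L1.*2.+2 - a) else zA.
Definition pp_hole i i' : {set T} := [set pp_cyc i i' (val a) | a : 'I_(L1.*2 + 4)].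

Definition pqA_cyc (i : 'I_n) (j : 'I_m) (a : nat) : T :=
  if a <= L1 then Pv i a else if a <= L1 + L2 + 1 then Qv j (L1 + L2 + 1 - a) else zA.
Definition pqA_hole i j : {set T} := [set pqA_cyc i j (val a) | a : 'I_(L1 + L2 + 3)].

Definition pqB_cyc (i : 'I_n) (j : 'I_m) (a : nat) : T :=
  if a <= L1 then Pv i (L1 - a) else if a <= L1 + L2 + 1 then Qv j (a - L1.+1) else zB.
Definition pqB_hole i j : {set T} := [set pqB_cyc i j (val a) | a : 'I_(L1 + L2 + 3)].

Ltac cyc_adj := rewrite ?even_relPP ?even_relQQ ?even_relPQ ?even_relQP ?even_rel_apexP
  ?even_relP_apex ?even_rel_apexQ ?even_relQ_apex ?even_rel_apexes ?eqxx /consec /=; try lia.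

Lemma pp_hole_is_hole i i' : i != i' -> is_hole re (pp_hole i i').
Proof.
move=> ii'; have i'i : (i' == i) = false by rewrite eq_sym (negbTE ii').
pose pos (x : T) := match x with
  | inl (inl (p, t)) => if p == i then val t else L1.*2.+2 - t
  | inl (inr _) => 0
  | inr b => if b then L1.*2.+3 else L1.+1 end.
apply: (cycle_set_hole (pos := pos)) => [|a aK|a b aK bK]; first lia.
- by rewrite /pp_cyc /even_pv; case_ifs; rewrite /= ?eqxx ?i'i ?inordK; lia.
- rewrite (succ_modn aK) (succ_modn bK) /pp_cyc.
  by case_ifs; cyc_adj; rewrite ?(negbTE ii') ?i'i; lia.
Qed.

Lemma pqA_hole_is_hole i j : ~~ R i j -> is_hole re (pqA_hole i j).
Proof.
move=> nRij; pose pos (x : T) := match x with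
  | inl (inl (_, t)) => val t
  | inl (inr (_, t)) => L1 + L2 + 1 - t
  | inr _ => L1 + L2 + 2 end.
apply: (cycle_set_hole (pos := pos)) => [|a aK|a b aK bK]; first lia.
- by rewrite /pqA_cyc /even_pv /even_qv; case_ifs; rewrite /= ?inordK; lia.
- by rewrite (succ_modn aK) (succ_modn bK) /pqA_cyc; case_ifs; cyc_adj; rewrite ?(negbTE nRij); lia.
Qed.

Lemma pqB_hole_is_hole i j : R i j -> is_hole re (pqB_hole i j).
Proof.
move=> Rij; pose pos (x : T) := match x with
  | inl (inl (_, t)) => L1 - t
  | inl (inr (_, t)) => t + L1.+1
  | inr _ => L1 + L2 + 2 end.
apply: (cycle_set_hole (pos := pos)) => [|a aK|a b aK bK]; first lia.
- by rewrite /pqB_cyc /even_pv /even_qv; case_ifs; rewrite /= ?inordK; lia.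
- by rewrite (succ_modn aK) (succ_modn bK) /pqB_cyc; case_ifs; cyc_adj; rewrite ?Rij; lia.
Qed.

Ltac cyc_index := case_ifs; first [done | congr even_pv; lia | congr even_qv; lia | exfalso; lia].

Lemma mem_pp_hole_l i i' t : t <= L1 -> Pv i t \in pp_hole i i'.
Proof. by move=> tL; apply: (mem_cycle_set (a := t)); [lia|rewrite /pp_cyc; cyc_index]. Qed.

Lemma mem_pp_hole_r i i' t : t <= L1 -> Pv i' t \in pp_hole i i'.
Proof.
by move=> tL; apply: (mem_cycle_set (a := L1.*2.+2 - t)); [lia|rewrite /pp_cyc; cyc_index].
Qed.

Lemma mem_pp_hole_apex i i' b : inr b \in pp_hole i i'.
Proof.
by case: b; [apply: (mem_cycle_set (a := L1.*2.+3))|apply: (mem_cycle_set (a := L1.+1))];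
  [lia|rewrite /pp_cyc; cyc_index|lia|rewrite /pp_cyc; cyc_index].
Qed.

Lemma mem_pqA_hole_p i j t : t <= L1 -> Pv i t \in pqA_hole i j.
Proof. by move=> tL; apply: (mem_cycle_set (a := t)); [lia|rewrite /pqA_cyc; cyc_index]. Qed.

Lemma mem_pqA_hole_q i j t : t <= L2 -> Qv j t \in pqA_hole i j.
Proof.
by move=> tL; apply: (mem_cycle_set (a := L1 + L2 + 1 - t)); [lia|rewrite /pqA_cyc; cyc_index].
Qed.

Lemma mem_pqA_hole_apex i j : zA \in pqA_hole i j.
Proof. by apply: (mem_cycle_set (a := L1 + L2 + 2)); [lia|rewrite /pqA_cyc; cyc_index]. Qed.

Lemma mem_pqB_hole_p i j t : t <= L1 -> Pv i t \in pqB_hole i j.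
Proof. by move=> tL; apply: (mem_cycle_set (a := L1 - t)); [lia|rewrite /pqB_cyc; cyc_index]. Qed.

Lemma mem_pqB_hole_q i j t : t <= L2 -> Qv j t \in pqB_hole i j.
Proof.
by move=> tL; apply: (mem_cycle_set (a := t + L1.+1)); [lia|rewrite /pqB_cyc; cyc_index].
Qed.

Lemma mem_pqB_hole_apex i j : zB \in pqB_hole i j.
Proof. by apply: (mem_cycle_set (a := L1 + L2 + 2)); [lia|rewrite /pqB_cyc; cyc_index]. Qed.

Lemma uniq_pv012 i x : x \notin [:: Pv i 0; Pv i 1; Pv i 2] ->
  uniq [:: Pv i 0; Pv i 1; Pv i 2; x].
Proof.
move=> x_new; rewrite -[[:: _; _; _; x]]/(rcons [:: Pv i 0; Pv i 1; Pv i 2] x) rcons_uniq x_new.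
by rewrite /= !inE !even_pv_eq ?eqxx //=; lia.
Qed.

Let i0 : 'I_n := Ordinal (ltnW n_gt1).
Let i1 : 'I_n := Ordinal n_gt1.

Lemma other_index (i : 'I_n) : exists i', i != i'.
Proof.
case: (i =P i0) => [->|]; last by exists i0; apply/eqP.
by exists i1; apply/eqP => /(congr1 val).
Qed.

Let reaches_hub (K : {set T}) := holes_equivalent re (pp_hole i0 i1) K.

Lemma pp_hole_reaches_hub i i' : i != i' -> reaches_hub (pp_hole i i').
Proof.
have close_l a b c : a != b -> a != c -> holes_equivalent re (pp_hole a b) (pp_hole a c).
  move=> ab ac; apply: close_holes_equivalent; try exact: pp_hole_is_hole.
  by apply: (holes_close_uniq4 (uniq_pv012 (i := a) (x := zA) _));
    rewrite ?mem_pp_hole_l ?mem_pp_hole_apex //; lia.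
have close_swap a b : a != b -> holes_equivalent re (pp_hole a b) (pp_hole b a).
  move=> ab; apply: close_holes_equivalent; first exact: pp_hole_is_hole.
    by apply: pp_hole_is_hole; rewrite eq_sym.
  by apply: (holes_close_uniq4 (uniq_pv012 (i := a) (x := zA) _));
    rewrite ?mem_pp_hole_l ?mem_pp_hole_r ?mem_pp_hole_apex //; lia.
have i01 : i0 != i1 by apply/eqP => /(congr1 val).
move=> ii'; rewrite /reaches_hub; case: (i =P i0) => [E|/eqP ii0].
- by rewrite E in ii' *; apply: close_l.
- apply: holes_equivalent_trans (close_l _ _ i i01 _) _; first by rewrite eq_sym.
  apply: holes_equivalent_trans (close_swap _ _ _) _; first by rewrite eq_sym.
  exact: close_l.
Qed.

Lemma pqA_hole_reaches_hub i j : ~~ R i j -> reaches_hub (pqA_hole i j).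
Proof.
move=> nRij; have [i' ii'] := other_index i.
apply: holes_equivalent_trans (pp_hole_reaches_hub ii') _.
apply: close_holes_equivalent; [exact: pp_hole_is_hole|exact: pqA_hole_is_hole|].
by apply: (holes_close_uniq4 (uniq_pv012 (i := i) (x := zA) _));
  rewrite ?mem_pp_hole_l ?mem_pp_hole_apex ?mem_pqA_hole_p ?mem_pqA_hole_apex //; lia.
Qed.

Lemma pqB_hole_reaches_hub i j : R i j -> reaches_hub (pqB_hole i j).
Proof.
move=> Rij; have [i' ii'] := other_index i.
apply: holes_equivalent_trans (pp_hole_reaches_hub ii') _.
apply: close_holes_equivalent; [exact: pp_hole_is_hole|exact: pqB_hole_is_hole|].
by apply: (holes_close_uniq4 (uniq_pv012 (i := i) (x := zB) _));
  rewrite ?mem_pp_hole_l ?mem_pp_hole_apex ?mem_pqB_hole_p ?mem_pqB_hole_apex //; lia.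
Qed.

Lemma even_hole_near C : is_hole re C ->
  exists K, [/\ is_hole re K, holes_close C K & reaches_hub K].
Proof.
move=> hC; have [[[[i s]|[j s]]|//] xC /= s_int] := even_hole_interior hC.
- rewrite even_pvE in xC; have onC := even_hole_pathP hC s_int xC.
  have bi_b'i : re (Pv i L1) (Pv i L1.-1) by rewrite even_relPP ?eqxx /consec /=; lia.
  have [y [yC yb' b_y _]] :=
    hole_other_nbr even_rel_sym hC (onC L1 (leqnn _)) (onC L1.-1 (leq_pred _)) bi_b'i.
  case: (even_nbr_end b_y) => [yE|yE|[j nRij yE]]; subst y; first by rewrite eqxx in yb'.
  + have [i' ii'] := other_index i; exists (pp_hole i i').
    split; [exact: pp_hole_is_hole| |exact: pp_hole_reaches_hub].
    by apply: (holes_close_uniq4 (uniq_pv012 (i := i) (x := zB) _));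
      rewrite ?yC ?onC ?mem_pp_hole_l ?mem_pp_hole_apex //; lia.
  + exists (pqA_hole i j); split; [exact: pqA_hole_is_hole| |exact: pqA_hole_reaches_hub].
    by apply: (holes_close_uniq4 (uniq_pv012 (i := i) (x := Qv j L2) _));
      rewrite ?yC ?onC ?mem_pqA_hole_p ?mem_pqA_hole_q //; lia.
- rewrite even_qvE in xC; have onC := even_hole_pathQ hC s_int xC.
  have uniq4 : uniq [:: Qv j 0; Qv j 1; Qv j 2; Qv j 3].
    by rewrite /= !inE !even_qv_eq ?eqxx //=; lia.
  case: (boolP (R i0 j)) => Rj.
  + exists (pqB_hole i0 j); split; [exact: pqB_hole_is_hole| |exact: pqB_hole_reaches_hub].
    by apply: (holes_close_uniq4 uniq4); rewrite ?onC ?mem_pqB_hole_q //; lia.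
  + exists (pqA_hole i0 j); split; [exact: pqA_hole_is_hole| |exact: pqA_hole_reaches_hub].
    by apply: (holes_close_uniq4 uniq4); rewrite ?onC ?mem_pqA_hole_q //; lia.
Qed.

Lemma even_frame_holes_equivalent : holes_all_equivalent re.
Proof.
apply: (holes_all_equivalent_hub (H := pp_hole i0 i1)) => C hC.
have [K [hK cCK hubK]] := even_hole_near hC.
by apply: holes_equivalent_trans hubK _; apply/holes_equivalent_sym/close_holes_equivalent.
Qed.

End EvenFrame.

Theorem mainTheorem14 (l : nat) (V : finType) (e : rel V) :
  7 <= l -> apexed_frame l e ->
  forall C D : {set V}, is_hole e C -> is_hole e D -> holes_equivalent e C D.
Proof.
move=> l7; rewrite /apexed_frame; case: ifP => l_odd.
- case=> k [A [f [_ [[A_irr A_sym] [A_thr [B_thr [_ [_ [f_bij ef]]]]]]]]].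
  have L2 : 2 <= (l - 3)./2 by lia.
  case: (boolP (gconnected A)) => A_conn; rewrite ?A_conn /= in ef.
  + apply: (holes_all_equivalent_iso (f := f \o @frame_flip k (l - 3)./2)).
    * exact: bij_comp f_bij (inv_bij (@frame_flipK _ _)).
    * by move=> x y; rewrite /= ef odd_frame_rel_flip.
    * apply: odd_frame_holes_equivalent; rewrite ?compl_relK //; exact: compl_rel_sym.
  + apply: (holes_all_equivalent_iso f_bij ef); apply: odd_frame_holes_equivalent => //.
    exact: compl_rel_gconnected.
- case=> n [m [R [f [n2 [_ [_ [_ [_ [f_bij ef]]]]]]]]].
  by apply: (holes_all_equivalent_iso f_bij ef); apply: even_frame_holes_equivalent; lia.
Qed.
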